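(* Let $G$ be a graph of order $n$, diameter $d$ and with a resolving set of size $k$. If $K_t$ is not a minor of $G$, then $n\leq (dk+1)^{d(t-1)}+1$. If $G$ has rankwidth at most $r$, then $n\leq (dk+1)^{d(3\cdot 2^r+2)}+1$.
   Context: A set $R$ of vertices of a graph $G$ is a resolving set if for each pair $u,v$ of distinct vertices there is $x\in R$ with $d(x,u)\neq d(x,v)$. Minors and rankwidth are the standard notions. *)

From mathcomp Require Import all_boot all_order all_algebra.
Set Implicit Arguments. Unset Strict Implicit. Unset Printing Implicit Defensive.
Import GRing.Theory.

Section Graphs.
Variable T : finType.
Variable e : rel T.

Definition ball (x : T) (n : nat) : {set T} :=
  iter n (fun S => S :|: [set y | [exists z in S, e z y]]) [set x].

(* graph distance; in a connected graph it is < #|T|; it equals #|T| when y is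
   unreachable from x (irrelevant: we only use it on connected graphs) *)
Definition dist (x y : T) : nat := find (fun n => y \in ball x n) (iota 0 #|T|).

Definition graph_connected : Prop := forall x y : T, connect e x y.

Definition has_diameter (d : nat) : Prop :=
  graph_connected /\ (forall x y, dist x y <= d) /\ (exists x y, dist x y = d).

Definition resolving (R : {set T}) : Prop :=
  forall u v : T, u != v -> exists2 x, x \in R & dist x u != dist x v.

Definition connected_in (S : {set T}) : Prop :=
  forall x y, x \in S -> y \in S ->
    connect (fun a b => [&& e a b, a \in S & b \in S]) x y.

Definition has_clique_minor (t : nat) : Prop :=
  exists B : 'I_t -> {set T},
    [/\ forall i, B i != set0,
        forall i, connected_in (B i),
        forall i j, i != j -> [disjoint B i & B j] &
        forall i j, i != j -> exists x y, [/\ x \in B i, y \in B j & e x y]].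

(* cut-rank of X: rank over GF(2) of the X x (V \ X) adjacency submatrix
   (written as a #|T| x #|T| matrix with zeroes outside X x (V\X)) *)
Definition cutrank (X : {set T}) : nat :=
  \rank (\matrix_(i < #|T|, j < #|T|)
          (if [&& enum_val i \in X, enum_val j \notin X & e (enum_val i) (enum_val j)]
           then 1%R else 0%R : 'F_2))%R.

(* a rank decomposition of width <= r: a subcubic tree (V, f) whose leaves are in
   bijection (via L) with the vertices of G, such that for every tree edge uv the
   cut-rank of the set of graph vertices whose leaf lies on u's side of uv is <= r *)
Definition rank_decomposition_le (r : nat) : Prop :=
  exists (V : finType) (f : rel V) (L : T -> V),
    [/\ symmetric f /\ irreflexive f,
        (forall a b, connect f a b) /\
          #|[set p : V * V | f p.1 p.2]| = 2 * (#|V| - 1),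
        (forall v, #|[set w | f v w]| <= 3),
        injective L /\ (forall v, (#|[set w | f v w]| == 1) = (v \in codom L)) &
        (forall u v, f u v ->
           cutrank [set x | connect (fun a b => f a b &&
                        ~~ (((a == u) && (b == v)) || ((a == v) && (b == u)))) u (L x)]
           <= r)].

(* rankwidth <= r; graphs with at most one vertex have rankwidth 0 *)
Definition rankwidth_le (r : nat) : Prop :=
  #|T| <= 1 \/ rank_decomposition_le r.

End Graphs.

From mathcomp Require Import all_boot all_order all_algebra zify.
Set Implicit Arguments. Unset Strict Implicit. Unset Printing Implicit Defensive.

(* For j < d, the traces on the resolving set R of the balls of radius j form a
   set system on R, and a vertex is determined by its d traces.  If one of these
   systems shatters S, then every two elements of S lie within distance j of a
   vertex that is farther than j from the rest of S.  Such an S of size t yields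
   a K_t minor: the Voronoi cells of S are connected, and the geodesic from that
   vertex to either of the two sites runs through their two cells only, so these
   are adjacent.  In rankwidth r such an S has fewer than 3 * 2^r + 3 elements:
   a balanced edge of the decomposition leaves more than 2^r elements of S on
   each side of a cut crossed by at most 2^r neighbourhood types, so on each side
   some element is dominated, from every vertex across the cut, by another
   element of its side, contradicting the separation of these two elements.
   Hence the systems have VC-dimension at most t - 1, resp. 3 * 2^r + 2, and the
   Sauer-Shelah lemma bounds their sizes. *)

Section Distance.
Variables (T : finType) (e : rel T).

Lemma ballS x n :
  ball e x n.+1 = ball e x n :|: [set y | [exists z in ball e x n, e z y]].
Proof. by []. Qed.

Lemma ball_step x n y z : y \in ball e x n -> e y z -> z \in ball e x n.+1.
Proof. by move=> yx yz; rewrite ballS !inE; apply/orP; right; apply/exists_inP; exists y. Qed.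

Lemma subset_ballS x n : ball e x n \subset ball e x n.+1.
Proof. by rewrite ballS subsetUl. Qed.

Lemma ballSP x n y : y \in ball e x n.+1 ->
  y \in ball e x n \/ exists2 z, z \in ball e x n & e z y.
Proof. by rewrite ballS !inE => /orP[|/exists_inP]; [left | right]. Qed.

Lemma ball1 x y : e x y -> y \in ball e x 1.
Proof. by apply: ball_step; rewrite set11. Qed.

Lemma ball_trans x y z m n :
  y \in ball e x m -> z \in ball e y n -> z \in ball e x (m + n).
Proof.
move=> yx; elim: n z => [|n IHn] z; first by rewrite addn0 => /set1P ->.
rewrite addnS => /ballSP[/IHn/(subsetP (subset_ballS _ _)) // | [w /IHn wx wz]].
exact: ball_step wx wz.
Qed.

Lemma mem_ball_last x p : path e x p -> last x p \in ball e x (size p).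
Proof.
elim/last_ind: p => [|p z IHp]; first by rewrite set11.
rewrite rcons_path last_rcons size_rcons => /andP[/IHp xp pz].
exact: ball_step xp pz.
Qed.

Lemma dist_le x y n : y \in ball e x n -> dist e x y <= n.
Proof.
move=> yx; have [lt_nT | le_Tn] := ltnP n #|T|.
  by rewrite leqNgt; apply/negP => /(before_find 0); rewrite nth_iota // add0n yx.
by apply: leq_trans (find_size _ _) _; rewrite size_iota.
Qed.

Lemma mem_ball_dist x y : connect e x y -> y \in ball e x (dist e x y).
Proof.
case/connectP => p /shortenP[q xq uq _] ->.
have lt_qT : size q < #|T| by have := max_card (mem (x :: q)); rewrite (card_uniqP uq).
have has_ball : has (fun n => last x q \in ball e x n) (iota 0 #|T|).
  by apply/hasP; exists (size q); rewrite ?mem_iota ?mem_ball_last.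
have := nth_find 0 has_ball; rewrite -/(dist e x (last x q)).
rewrite has_find size_iota in has_ball.
by rewrite nth_iota // add0n.
Qed.

Lemma distxx x : dist e x x = 0.
Proof. by apply/eqP; rewrite -leqn0 dist_le ?set11. Qed.

Lemma dist_edge x y : e x y -> dist e x y <= 1.
Proof. by move/ball1/dist_le. Qed.

Hypothesis e_sym : symmetric e.
Hypothesis e_conn : forall x y, connect e x y.

Lemma ball_sym x y n : y \in ball e x n -> x \in ball e y n.
Proof.
elim: n y => [|n IHn] y; first by rewrite !inE eq_sym.
case/ballSP => [/IHn/(subsetP (subset_ballS _ _)) // | [z /IHn xz zy]].
by rewrite -add1n; apply: ball_trans xz; apply: ball1; rewrite e_sym.
Qed.

Lemma distC x y : dist e x y = dist e y x.
Proof.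
apply/eqP; rewrite eqn_leq; apply/andP.
by split; apply: dist_le; apply: ball_sym; apply: mem_ball_dist (e_conn _ _).
Qed.

Lemma dist_triangle x y z : dist e x z <= dist e x y + dist e y z.
Proof. by apply: dist_le; apply: ball_trans; apply: mem_ball_dist (e_conn _ _). Qed.

Lemma dist0_eq x y : dist e x y = 0 -> x = y.
Proof. by move=> dxy; have := mem_ball_dist (e_conn x y); rewrite dxy => /set1P. Qed.

Lemma dist_pred x y n :
  dist e x y = n.+1 -> exists2 z, e z y & dist e x z = n.
Proof.
move=> dxy; have := mem_ball_dist (e_conn x y); rewrite dxy.
case/ballSP => [/dist_le | [z zx zy]]; first by rewrite dxy ltnn.
exists z => //; apply/eqP; rewrite eqn_leq dist_le //= -ltnS -dxy.
exact: dist_le (ball_step (mem_ball_dist (e_conn x z)) zy).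
Qed.

Lemma dist_succ x y : x != y -> exists2 z, e x z & (dist e z y).+1 = dist e x y.
Proof.
rewrite distC; case dyx: (dist e y x) => [|n]; first by rewrite (dist0_eq dyx) eqxx.
by case: (dist_pred dyx) => z zx dyz _; exists z; rewrite 1?e_sym // distC dyz.
Qed.

End Distance.

Lemma leq_expn2r m n e : m <= n -> m ^ e <= n ^ e.
Proof. by move=> le_mn; elim: e => // e IHe; rewrite !expnS leq_mul. Qed.

Lemma card_bigcup_le (I T : finType) (P : pred I) (A : I -> {set T}) :
  #|\bigcup_(i | P i) A i| <= \sum_(i | P i) #|A i|.
Proof.
elim/big_rec2: _ => [|i n B _ le_Bn]; first by rewrite cards0.
by apply: leq_trans (leq_card_setU _ _).1 _; rewrite leq_add2l.
Qed.

Section SauerShelah.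
Variable T : finType.
Implicit Types (F : {set {set T}}) (R S : {set T}) (x : T).

Definition shatters F S :=
  [forall Q : {set T}, (Q \subset S) ==> [exists A in F, A :&: S == Q]].

Lemma shattersP F S :
  reflect (forall Q : {set T}, Q \subset S -> exists2 A, A \in F & A :&: S = Q) (shatters F S).
Proof.
apply: (iffP forallP) => [shFS Q QS | shFS Q]; last first.
  by apply/implyP => /shFS[A FA AS]; apply/exists_inP; exists A; rewrite ?AS.
by have /implyP/(_ QS)/exists_inP[A FA /eqP] := shFS Q; exists A.
Qed.

Lemma shatters_set0 F : F != set0 -> shatters F set0.
Proof.
case/set0Pn => A FA; apply/shattersP => Q; rewrite subset0 => /eqP ->.
by exists A; rewrite ?setI0.
Qed.

Lemma shatters_imset_setD1 F S x :
  x \notin S -> shatters [set A :\ x | A in F] S -> shatters F S.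
Proof.
move=> Sx /shattersP shF; apply/shattersP => Q /shF[_ /imsetP[A FA ->] <-].
exists A => //; apply/setP => y; rewrite !inE.
by case: eqP => // ->; rewrite (negbTE Sx) andbF.
Qed.

Lemma shatters_setU1 F S x : x \notin S ->
  shatters [set A in F | (x \notin A) && (x |: A \in F)] S -> shatters F (x |: S).
Proof.
move=> Sx /shattersP shF; apply/shattersP => Q QxS.
have /shF[A] : Q :\ x \subset S.
  by apply/subsetP => y /setD1P[yx /(subsetP QxS)]; rewrite in_setU1 (negbTE yx).
rewrite inE => /andP[FA /andP[Ax FxA]] AS.
case Qx : (x \in Q).
  by exists (x |: A); rewrite // -setUIr AS setD1K.
exists A => //; apply/setP => y; move/setP/(_ y): AS; rewrite !inE.
by case: (eqVneq y x) => [-> _ | _ /= <-]; rewrite ?(negbTE Ax) ?Qx.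
Qed.

Lemma card_split_setD1 F x : #|F| =
  #|[set A :\ x | A in F]| + #|[set A in F | (x \notin A) && (x |: A \in F)]|.
Proof.
pose P := [set A : {set T} | x \in A].
have Fout_id : [set A :\ x | A in F :\: P] = F :\: P.
  rewrite -[RHS]imset_id; apply: eq_in_imset => A; rewrite !inE => /andP[Ax _].
  by apply/setDidPl; rewrite disjoint_sym disjoints1.
have card_Fin : #|[set A :\ x | A in F :&: P]| = #|F :&: P|.
  apply: card_in_imset => A B; rewrite !inE => /andP[_ Ax] /andP[_ Bx] eqAB.
  by rewrite -(setD1K Ax) -(setD1K Bx) eqAB.
have overlap : (F :\: P) :&: [set A :\ x | A in F :&: P] =
               [set A in F | (x \notin A) && (x |: A \in F)].
  apply/setP => A; rewrite !inE; apply/idP/idP.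
    case/andP => /andP[Ax FA] /imsetP[B]; rewrite !inE => /andP[FB Bx] eqA.
    by rewrite FA Ax eqA setD1K.
  case/and3P => FA Ax FxA; rewrite Ax FA /=; apply/imsetP; exists (x |: A).
    by rewrite !inE FxA eqxx.
  by rewrite setU1K.
have -> : [set A :\ x | A in F] = (F :\: P) :|: [set A :\ x | A in F :&: P].
  by rewrite -{1}(setID F P) imsetU Fout_id setUC.
by apply/eqP; rewrite -overlap cardsUI card_Fin addnC cardsID.
Qed.

Theorem sauer_shelah (D : nat) R F : {in F, forall A : {set T}, A \subset R} ->
  (forall S, S \subset R -> #|S| = D.+1 -> ~~ shatters F S) -> #|F| <= #|R|.+1 ^ D.
Proof.
move Dn : #|R| => n; elim: n D R F Dn => [|n IHn] D R F cardR subR noshat.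
  rewrite exp1n; apply/card_le1_eqP => A B /subR + /subR.
  by move/eqP: cardR; rewrite cards_eq0 => /eqP ->; rewrite !subset0 => /eqP -> /eqP ->.
have [x Rx] : exists x, x \in R by apply/card_gt0P; rewrite cardR.
have cardR' : #|R :\ x| = n by move: cardR; rewrite (cardsD1 x) Rx => -[].
have subR' S : S \subset R :\ x -> x \notin S /\ S \subset R.
  by rewrite subsetD1 => /andP[].
rewrite (card_split_setD1 F x); set F2 := [set A in F | _].
have le_F1 : #|[set A :\ x | A in F]| <= n.+1 ^ D.
  apply: IHn cardR' _ _ => [_ /imsetP[A /subR AR ->] | S /subR'[Sx SR] cardS].
    exact: setSD.
  exact: contra (shatters_imset_setD1 Sx) (noshat S SR cardS).
have noshat2 S : S \subset R :\ x -> #|S| = D -> ~~ shatters F2 S.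
  move=> /subR'[Sx SR] cardS; apply: contra (shatters_setU1 Sx) (noshat _ _ _).
    by rewrite subUset sub1set Rx.
  by rewrite cardsU1 Sx cardS.
have le_F2 : #|F2| <= if D is D'.+1 then n.+1 ^ D' else 0.
  case: D {noshat le_F1} noshat2 => [|D] noshat2.
    rewrite leqn0 cards_eq0; apply: contraNT (@shatters_set0 _) _.
    exact: noshat2 (sub0set _) (cards0 _).
  apply: IHn cardR' _ noshat2 => A; rewrite inE subsetD1 => /and3P[/subR -> Ax _].
  exact: Ax.
apply: leq_trans (leq_add le_F1 le_F2) _.
case: D {noshat noshat2 le_F1 le_F2} => [|D] //.
by rewrite addnC [n.+1 ^ D.+1]expnS -mulSn expnS leq_mul2l leq_expn2r ?orbT.
Qed.

End SauerShelah.

Section Traces.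
Variables (T : finType) (e : rel T).

Definition ball_separated (S : {set T}) (j : nat) :=
  forall x y, x \in S -> y \in S ->
    exists c, [/\ dist e x c <= j, dist e y c <= j &
                forall z, z \in S -> z != x -> z != y -> j < dist e z c].

Variable R : {set T}.

Definition trace j v := [set x in R | dist e x v <= j].
Definition traces j := [set trace j v | v : T].

Lemma shatters_traces_separated j (S : {set T}) :
  S \subset R -> shatters (traces j) S -> ball_separated S j.
Proof.
move=> SR /shattersP shS x y Sx Sy.
have /shS[_ /imsetP[c _ ->] trS] : [set x; y] \subset S by rewrite subUset !sub1set Sx Sy.
have mem_trace z : z \in S -> (dist e z c <= j) = (z \in [set x; y]).
  by move=> Sz; move/setP/(_ z): trS; rewrite !inE Sz (subsetP SR z Sz) andbT.
exists c; split; [by rewrite mem_trace ?set21 | by rewrite mem_trace ?set22 |].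
by move=> z Sz zx zy; rewrite ltnNge mem_trace // !inE negb_or zx zy.
Qed.

Variable d : nat.
Hypothesis dist_le_d : forall x y, dist e x y <= d.
Hypothesis R_res : resolving e R.

Lemma traces_inj u v : (forall j, j < d -> trace j u = trace j v) -> u = v.
Proof.
move=> eq_tr; apply/eqP/negPn/negP => /R_res[x Rx].
have lt_dist_trace a b : (forall j, j < d -> trace j a = trace j b) ->
    dist e x a < dist e x b -> False.
  move=> eq_ab lt_ab; have lt_ad := leq_trans lt_ab (dist_le_d x b).
  by move/setP/(_ x): (eq_ab _ lt_ad); rewrite !inE Rx leqnn leqNgt lt_ab.
rewrite neq_ltn => /orP[]; first exact: lt_dist_trace.
by apply: lt_dist_trace => j /eq_tr.
Qed.

Lemma card_le_traces N : (forall j, #|traces j| <= N) -> #|T| <= N ^ d.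
Proof.
move=> le_tr; pose phi v : {ffun 'I_d -> {set T}} := [ffun j : 'I_d => trace j v].
have phi_inj : injective phi.
  move=> u v /ffunP eq_phi; apply: traces_inj => j lt_jd.
  by have := eq_phi (Ordinal lt_jd); rewrite !ffunE.
rewrite -(card_codom phi_inj).
have /subset_leq_card/leq_trans-> // : codom phi \subset family (fun j : 'I_d => mem (traces j)).
  apply/subsetP => _ /codomP[v ->]; apply/familyP => j.
  by rewrite ffunE; apply: imset_f.
rewrite card_family foldrE big_image /= -[in X in _ <= X](card_ord d) -prod_nat_const.
by apply: leq_prod => j _; apply: le_tr.
Qed.

Lemma card_le_unseparated (D : nat) :
  (forall j (S : {set T}), S \subset R -> #|S| = D.+1 -> ~ ball_separated S j) ->
  #|T| <= #|R|.+1 ^ (d * D).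
Proof.
move=> nosep; rewrite mulnC expnM; apply: card_le_traces => j.
apply: sauer_shelah => [_ /imsetP[v _ ->] | S SR cardS].
  by apply/subsetP => x; rewrite inE => /andP[].
by apply/negP => /(shatters_traces_separated SR); apply: nosep SR cardS.
Qed.

End Traces.

Section VoronoiMinor.
Variables (T : finType) (e : rel T).
Hypothesis e_sym : symmetric e.
Hypothesis e_conn : forall x y, connect e x y.
Variables (t : nat) (s : 'I_t -> T).
Hypothesis s_inj : injective s.

(* Lexicographic in (distance from s i to u, i), as i < t: ties go to the least index. *)
Definition site_key i u := dist e (s i) u * t + i.

Definition cell i := [set u | [forall i', site_key i u <= site_key i' u]].

Lemma site_key_inj u : injective (site_key^~ u).
Proof.
move=> i i' /(congr1 (modn^~ t)); rewrite /site_key /= !modnMDl !modn_small //.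
exact: val_inj.
Qed.

Lemma site_key_lt i i' u :
  dist e (s i) u < dist e (s i') u -> site_key i u < site_key i' u.
Proof.
move=> lt_ii'; have := ltn_ord i; rewrite /site_key.
have : (dist e (s i) u).+1 * t <= dist e (s i') u * t by rewrite leq_mul2r lt_ii' orbT.
nia.
Qed.

Lemma mem_cell_inj i i' u : u \in cell i -> u \in cell i' -> i = i'.
Proof.
rewrite !inE => /forallP/(_ i') le_ii' /forallP/(_ i) le_i'i.
by apply: (@site_key_inj u); apply/eqP; rewrite eqn_leq le_ii' le_i'i.
Qed.

Lemma cell_cover (i0 : 'I_t) u : exists i, u \in cell i.
Proof.
have [i _ min_i] := @arg_minnP _ i0 predT (site_key^~ u) isT.
by exists i; rewrite inE; apply/forallP => i'; apply: min_i.
Qed.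

Lemma site_in_cell i : s i \in cell i.
Proof.
rewrite inE; apply/forallP => i'; rewrite /site_key distxx.
have [-> | ne_i'i] := eqVneq i' i; first by rewrite distxx.
have : dist e (s i') (s i) != 0 by apply: contra ne_i'i => /eqP/dist0_eq/s_inj ->.
have := ltn_ord i; nia.
Qed.

Lemma connect_cell_site i u :
  u \in cell i -> connect (fun a b => [&& e a b, a \in cell i & b \in cell i]) (s i) u.
Proof.
move Dn : (dist e (s i) u) => n; elim: n u Dn => [|n IHn] u Dn ui.
  by rewrite (dist0_eq e_conn Dn).
have [p pu Dp] := dist_pred e_conn Dn.
have pi : p \in cell i.
  rewrite inE; apply/forallP => i'; move: ui; rewrite inE => /forallP/(_ i').
  have : dist e (s i') u * t <= (dist e (s i') p).+1 * t.
    rewrite leq_mul2r -addn1; apply/orP; right.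
    by apply: leq_trans (dist_triangle e_conn _ p _) _; rewrite leq_add2l dist_edge.
  rewrite /site_key Dn Dp; nia.
by apply: connect_trans (IHn _ Dp pi) (connect1 _); rewrite pu pi ui.
Qed.

Lemma cell_connected i : connected_in e (cell i).
Proof.
move=> x y xi yi; apply: connect_trans (connect_cell_site yi).
have sym_cell : symmetric (fun a b => [&& e a b, a \in cell i & b \in cell i]).
  by move=> a b; rewrite e_sym [(a \in _) && _]andbC.
by rewrite (sym_connect_sym sym_cell) connect_cell_site.
Qed.

Section Geodesic.
Variables (j : nat) (a b : 'I_t) (c : T).
Hypothesis dist_ac : dist e (s a) c <= j.
Hypothesis far_c : forall m, m != a -> m != b -> j < dist e (s m) c.

Lemma geodesic_in_cells w :
  dist e c w + dist e w (s a) = dist e c (s a) -> w \in cell a :|: cell b.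
Proof.
move=> geo_w; have [m wm] := cell_cover a w.
have [<- | ma] := eqVneq m a; first by rewrite inE wm.
have [<- | mb] := eqVneq m b; first by rewrite inE wm orbT.
have : dist e (s a) w < dist e (s m) w.
  have := far_c ma mb; have := dist_triangle e_conn (s m) w c.
  move: dist_ac geo_w; rewrite (distC e_sym e_conn w c) (distC e_sym e_conn w (s a)).
  rewrite (distC e_sym e_conn c (s a)); lia.
by move/site_key_lt; move: wm; rewrite inE => /forallP/(_ a); rewrite ltnNge => ->.
Qed.

Lemma geodesic_walk w : a != b -> w \in cell b ->
  dist e c w + dist e w (s a) = dist e c (s a) ->
  exists x y, [/\ x \in cell a, y \in cell b & e x y].
Proof.
move=> ab; move Dn : (dist e w (s a)) => n.
elim: n w Dn => [|n IHn] w Dn wb geo_w.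
  rewrite (dist0_eq e_conn Dn) in wb.
  by rewrite (mem_cell_inj (site_in_cell a) wb) eqxx in ab.
have wa : w != s a by apply/eqP => wa; rewrite wa distxx in Dn.
have [w' ww'] := dist_succ e_sym e_conn wa; rewrite Dn => -[Dw'].
have geo_w' : dist e c w' + dist e w' (s a) = dist e c (s a).
  have := dist_triangle e_conn c w w'; have := dist_edge ww'.
  have := dist_triangle e_conn c w' (s a); move: geo_w; rewrite Dw'; lia.
case/setUP: (geodesic_in_cells geo_w') => [w'a | w'b].
  by exists w', w; rewrite e_sym.
by rewrite Dw' in geo_w'; apply: IHn Dw' w'b geo_w'.
Qed.

End Geodesic.

Lemma cells_adjacent j a b c : a != b ->
  dist e (s a) c <= j -> dist e (s b) c <= j ->
  (forall m, m != a -> m != b -> j < dist e (s m) c) ->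
  exists x y, [/\ x \in cell a, y \in cell b & e x y].
Proof.
move=> ab ac bc far.
have geo_c u : dist e c c + dist e c (s u) = dist e c (s u) by rewrite distxx.
wlog cb : a b ab ac bc far / c \in cell b => [wlog_cb | ].
  case/setUP: (geodesic_in_cells ac far (geo_c a)) => [ca | cb]; last exact: wlog_cb.
  have far' m : m != b -> m != a -> j < dist e (s m) c by move=> mb ma; apply: far.
  have ba : b != a by rewrite eq_sym.
  have [y [x [yb xa yx]]] := wlog_cb b a ba bc ac far' ca.
  by exists x, y; rewrite e_sym.
exact: geodesic_walk ac far _ ab cb (geo_c a).
Qed.

End VoronoiMinor.

Lemma separated_clique_minor (T : finType) (e : rel T) (S : {set T}) j :
  symmetric e -> (forall x y, connect e x y) ->
  ball_separated e S j -> has_clique_minor e #|S|.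
Proof.
move=> e_sym e_conn sepS; pose s : 'I_#|S| -> T := enum_val.
have s_inj : injective s := @enum_val_inj _ _.
exists (cell e s); split.
- by move=> i; apply/set0Pn; exists (s i); apply: site_in_cell.
- by move=> i; apply: cell_connected.
- move=> i i' ii'; rewrite disjoints_subset; apply/subsetP => u ui.
  rewrite inE; apply/negP => ui'.
  by move: ii'; rewrite (mem_cell_inj ui ui') eqxx.
- move=> i i' ii'; have [c [ic i'c far]] := sepS _ _ (enum_valP i) (enum_valP i').
  apply: cells_adjacent ii' ic i'c _ => // m mi mi'.
  by apply: far; rewrite ?enum_valP ?(inj_eq s_inj).
Qed.

Section CutRank.
Variables (T : finType) (e : rel T).

Definition cut_nbhd (X : {set T}) p := [set y | (y \notin X) && e p y].

(* The neighbourhood of p across the cut is row p of the cut matrix, a vector of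
   its GF(2) row space. *)
Lemma card_cut_nbhds X : #|[set cut_nbhd X p | p in X]| <= 2 ^ cutrank e X.
Proof.
rewrite /cutrank; set M := (\matrix_(i, j) _)%R.
pose nbhd (w : 'rV['F_2]_#|T|) := [set y | w ord0 (enum_rank y) == 1%R].
have sub_rows : [set cut_nbhd X p | p in X] \subset
                [set nbhd (D *m row_base M)%R | D in [set: 'rV['F_2]_(\rank M)]].
  apply/subsetP => _ /imsetP[p Xp ->].
  have /submxP[D rowD] : (row (enum_rank p) M <= row_base M)%MS by rewrite eq_row_base row_sub.
  apply/imsetP; exists D; rewrite ?inE // -rowD; apply/setP => y.
  by rewrite !inE !mxE !enum_rankK Xp; case: (_ && _).
apply: leq_trans (subset_leq_card sub_rows) (leq_trans (leq_imset_card _ _) _).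
by rewrite cardsT card_mx card_Fp // mul1n.
Qed.

Hypothesis e_sym : symmetric e.
Hypothesis e_conn : forall x y, connect e x y.

Lemma geodesic_crosses_cut (X : {set T}) a c : a \in X -> c \notin X ->
  exists p q, [/\ p \in X, q \notin X, e p q & dist e a c = dist e a p + 1 + dist e q c].
Proof.
move=> Xa Xc; suff : forall w, w \in X -> dist e a w + dist e w c = dist e a c ->
    exists p q, [/\ p \in X, q \notin X, e p q & dist e a c = dist e a p + 1 + dist e q c].
  by move/(_ a Xa); apply; rewrite distxx.
move=> w; move Dn : (dist e w c) => n; elim: n w Dn => [|n IHn] w Dn Xw geo_w.
  by move: Xw; rewrite (dist0_eq e_conn Dn) (negbTE Xc).
have wc : w != c by apply: contraNneq Xc => <-.
have [w' ww'] := dist_succ e_sym e_conn wc; rewrite Dn => -[Dw'].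
case Xw' : (w' \in X); last by exists w, w'; split; rewrite ?Xw' //; lia.
apply: (IHn w' Dw' Xw'); have := dist_triangle e_conn a w w'.
have := dist_triangle e_conn a w' c; have := dist_edge ww'; lia.
Qed.

Variables (X A : {set T}).

Definition nearest tau := [set a in A | [exists p in X, (cut_nbhd X p == tau) &&
  [forall a' in A, (a' != a) ==>
     [forall p' in X, (cut_nbhd X p' == tau) ==> (dist e a p < dist e a' p')]]]].

Lemma card_nearest_le1 tau : #|nearest tau| <= 1.
Proof.
apply/card_le1_eqP => a a'; rewrite !inE.
move=> /andP[Aa /exists_inP[p Xp /andP[/eqP tau_p near_a]]].
move=> /andP[Aa' /exists_inP[p' Xp' /andP[/eqP tau_p' near_a']]].
apply/eqP/negPn/negP => aa'.
move/forall_inP/(_ a' Aa'): near_a; rewrite aa' => /forall_inP/(_ p' Xp').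
move/forall_inP/(_ a Aa): near_a'; rewrite (eq_sym a) aa' => /forall_inP/(_ p Xp).
by rewrite tau_p tau_p' !eqxx /=; lia.
Qed.

Lemma exists_dominated r : cutrank e X <= r -> A \subset X -> 2 ^ r < #|A| ->
  exists2 a, a \in A & forall c, c \notin X ->
    exists2 a', a' \in A & (a' != a) && (dist e a' c <= dist e a c).
Proof.
move=> rX AX ltA; pose types := [set cut_nbhd X p | p in X].
have : ~~ (A \subset \bigcup_(tau in types) nearest tau).
  apply/negP => /subset_leq_card/leq_trans/(_ (card_bigcup_le _ _)) le_A.
  have : \sum_(tau in types) #|nearest tau| <= #|types|.
    by rewrite -sum1_card; apply: leq_sum => tau _; apply: card_nearest_le1.
  move/(leq_trans le_A)/leq_trans/(_ (card_cut_nbhds X)).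
  by move/leq_trans/(_ (leq_pexp2l (isT : 0 < 2) rX)); rewrite leqNgt ltA.
case/subsetPn => a Aa not_near; exists a => // c Xc.
have [p [q [Xp Xq epq Dac]]] := geodesic_crosses_cut (subsetP AX a Aa) Xc.
have : a \notin nearest (cut_nbhd X p).
  by apply: contra not_near => near_a; apply/bigcupP; exists (cut_nbhd X p); rewrite ?imset_f.
rewrite inE Aa /=; move/exists_inPn/(_ p Xp); rewrite eqxx /=.
case/forall_inPn => a' Aa'; rewrite negb_imply => /andP[a'a /forall_inPn[p' Xp']].
rewrite negb_imply -leqNgt => /andP[/eqP tau_p' le_a'p'].
have : q \in cut_nbhd X p' by rewrite tau_p' inE Xq epq.
rewrite inE => /andP[_ ep'q]; exists a' => //; rewrite a'a /= Dac.
have := dist_triangle e_conn a' p' c; have := dist_triangle e_conn p' q c.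
have := dist_edge ep'q; lia.
Qed.

End CutRank.

Lemma connect_ind (T : finType) (r : rel T) (P : T -> Prop) x y :
  connect r x y -> P x -> (forall a b, P a -> r a b -> P b) -> P y.
Proof.
case/connectP => p + ->; elim: p x => [|z p IHp] x //= /andP[rxz rp] Px step.
exact: IHp rp (step _ _ Px rxz) step.
Qed.

(* Orienting every non-root vertex towards its parent in a BFS tree from [o]
   gives two disjoint families of [#|V| - 1] arcs. *)
Lemma card_arcs_ge (V : finType) (h : rel V) :
  symmetric h -> (forall a b, connect h a b) ->
  2 * (#|V| - 1) <= #|[set p : V * V | h p.1 p.2]|.
Proof.
move=> h_sym h_conn; case: (posnP #|V|) => [-> // | /card_gt0P[o _]].
pose par y := odflt o [pick p | h p y && ((dist h o p).+1 == dist h o y)].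
have parP y : y != o -> h (par y) y /\ (dist h o (par y)).+1 = dist h o y.
  move=> yo; rewrite /par; case: pickP => [p /andP[hpy /eqP] // | none].
  case Dy: (dist h o y) => [|n]; first by rewrite (dist0_eq h_conn Dy) eqxx in yo.
  by have [p hpy Dp] := dist_pred h_conn Dy; have := none p; rewrite hpy Dp Dy eqxx.
pose up := [set (y, par y) | y in [set~ o]].
pose down := [set (par y, y) | y in [set~ o]].
have card_up : #|up| = #|V| - 1.
  by rewrite card_in_imset ?cardsC1 ?subn1 // => y y' _ _ [].
have card_down : #|down| = #|V| - 1.
  by rewrite card_in_imset ?cardsC1 ?subn1 // => y y' _ _ [].
have up_down : up :&: down = set0.
  apply/setP => -[a b]; rewrite !inE; apply/negP.
  case/andP => /imsetP[y + [-> ->]] /imsetP[y' + [Ey Ey']].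
  rewrite !inE => /parP[_ Dy] /parP[_ Dy']; move: Dy Dy'; rewrite -Ey Ey'; lia.
have : up :|: down \subset [set p : V * V | h p.1 p.2].
  apply/subsetP => -[a b]; rewrite !inE => /orP[] /imsetP[y + [-> ->]];
    by rewrite !inE => /parP[] //; rewrite h_sym.
move/subset_leq_card; apply: leq_trans.
by have := cardsUI up down; rewrite up_down cards0 addn0 card_up card_down mul2n addnn => ->.
Qed.

Section SubcubicTree.
Variables (V : finType) (f : rel V).
Hypothesis f_sym : symmetric f.
Hypothesis f_irr : irreflexive f.
Hypothesis f_conn : forall a b, connect f a b.
Hypothesis f_arcs : #|[set p : V * V | f p.1 p.2]| = 2 * (#|V| - 1).

Definition remove_edge u v : rel V :=
  fun a b => f a b && ~~ (((a == u) && (b == v)) || ((a == v) && (b == u))).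

Definition side u v := [set y | connect (remove_edge u v) u y].

Lemma in_side u v y : (y \in side u v) = connect (remove_edge u v) u y.
Proof. by rewrite inE. Qed.

Lemma remove_edge_sym u v : symmetric (remove_edge u v).
Proof.
move=> a b; rewrite /remove_edge f_sym; congr (_ && ~~ _).
by case: (a == u); case: (b == v); case: (a == v); case: (b == u).
Qed.

Lemma remove_edgeC u v : remove_edge u v =2 remove_edge v u.
Proof. by move=> a b; rewrite /remove_edge orbC. Qed.

Lemma side_cover u v y : y \in side u v \/ y \in side v u.
Proof.
rewrite !inE (eq_connect (remove_edgeC v u)).
apply: (connect_ind (P := fun y => connect (remove_edge u v) u y \/
                               connect (remove_edge u v) v y)) (f_conn u y) _ _.
  by left.
move=> a b c_a fab; case gab : (remove_edge u v a b).
  by case: c_a => c_a; [left | right]; apply: connect_trans c_a (connect1 gab).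
by move: gab; rewrite /remove_edge fab => /negbFE/orP[]/andP[_ /eqP->]; [right | left].
Qed.

(* In a tree every edge is a bridge: otherwise removing it would leave a
   connected graph with fewer than [2 * (#|V| - 1)] arcs. *)
Lemma side_bridge u v : f u v -> v \notin side u v.
Proof.
move=> fuv; rewrite inE; apply/negP => c_uv.
have c_u y : connect (remove_edge u v) u y.
  case: (side_cover u v y); rewrite !inE // (eq_connect (remove_edgeC v u)).
  exact: connect_trans c_uv.
have g_conn a b : connect (remove_edge u v) a b.
  by apply: connect_trans (c_u b); rewrite (sym_connect_sym (remove_edge_sym u v)).
have uv : u != v by apply: contraTneq fuv => ->; rewrite f_irr.
have arcs : [set p : V * V | f p.1 p.2] =
            (u, v) |: ((v, u) |: [set p : V * V | remove_edge u v p.1 p.2]).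
  apply/setP => -[a b]; rewrite !inE /remove_edge /= !xpair_eqE orbA.
  have : ((a == u) && (b == v)) || ((a == v) && (b == u)) -> f a b.
    by case/orP => /andP[/eqP-> /eqP->]; rewrite // f_sym.
  by case: (_ || _) => /= [-> | _]; rewrite ?andbT.
have vu_new : (v, u) \notin [set p : V * V | remove_edge u v p.1 p.2].
  by rewrite inE /remove_edge /= !eqxx orbT andbF.
have uv_new : (u, v) \notin (v, u) |: [set p : V * V | remove_edge u v p.1 p.2].
  by rewrite !inE /remove_edge /= !eqxx !xpair_eqE (negbTE uv) andbF.
have := card_arcs_ge (remove_edge_sym u v) g_conn.
by move: f_arcs; rewrite arcs !cardsU1 uv_new vu_new !add1n => <-; rewrite ltnNge leqnSn.
Qed.

Lemma sides_disjoint u v y : f u v -> y \in side u v -> y \notin side v u.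
Proof.
move=> fuv; rewrite !inE (eq_connect (remove_edgeC v u)) => c_uy.
apply: contra (side_bridge fuv) => c_vy; rewrite inE (connect_trans c_uy) //.
by rewrite (sym_connect_sym (remove_edge_sym u v)).
Qed.

Lemma setC_side u v : f u v -> ~: side u v = side v u.
Proof.
move=> fuv; apply/setP => y; rewrite inE; case: (side_cover u v y) => y_side.
  by rewrite y_side (negbTE (sides_disjoint fuv y_side)).
by rewrite y_side (sides_disjoint _ y_side) // f_sym.
Qed.

Lemma side_split u v y : f u v -> y \in side u v -> y != u ->
  exists z, [/\ f u z, z != v & y \in side z u].
Proof.
move=> fuv; rewrite inE => c_uy yu.
suff : y = u \/ exists z, [/\ f u z, z != v & y \in side z u].
  by case=> // yu'; rewrite yu' eqxx in yu.
apply: (connect_ind (P := fun y => y = u \/ exists z, [/\ f u z, z != v & y \in side z u]))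
  c_uy _ _; first by left.
move=> a b [-> | [z [fuz zv za]]] gab.
  move: gab; rewrite /remove_edge eqxx /= => /andP[fub]; rewrite negb_or => /andP[bv _].
  by right; exists b; rewrite inE connect0.
have [-> | bu] := eqVneq b u; first by left.
have au : a != u by apply: contraTneq za => ->; apply: side_bridge; rewrite f_sym.
right; exists z; split=> //; rewrite in_side in za; rewrite in_side.
apply: connect_trans za (connect1 _).
by move: gab => /andP[fab _]; rewrite /remove_edge fab (negbTE au) (negbTE bu) !andbF.
Qed.

Lemma side_proper u v z : f u v -> f u z -> z != v -> side z u \proper side u v.
Proof.
move=> fuv fuz zv; have u_zu : u \notin side z u by apply: side_bridge; rewrite f_sym.
apply/properP; split; last by exists u; rewrite // inE connect0.
apply/subsetP => y; rewrite [y \in side z u]inE => c_zy.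
suff /andP[] : (y \in side u v) && (y \in side z u) by [].
apply: (connect_ind (P := fun y => (y \in side u v) && (y \in side z u))) c_zy _ _.
  have uv : u != v by apply: contraTneq fuv => ->; rewrite f_irr.
  rewrite !inE connect0 andbT; apply: connect1.
  by rewrite /remove_edge fuz eqxx (negbTE zv) (negbTE uv).
move=> a b /andP[a_uv a_zu] gab.
have au : a != u by apply: contraTneq a_zu => ->.
have b_zu : b \in side z u.
  by rewrite in_side in a_zu; rewrite in_side (connect_trans a_zu (connect1 gab)).
have bu : b != u by apply: contraTneq b_zu => ->.
rewrite b_zu andbT; rewrite in_side in a_uv; rewrite in_side.
apply: connect_trans a_uv (connect1 _).
by move: gab => /andP[fab _]; rewrite /remove_edge fab (negbTE au) (negbTE bu) !andbF.
Qed.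

Lemma leaf_side u v : #|[set w | f u w]| = 1 -> f u v -> side u v = [set u].
Proof.
move=> /eqP/cards1P[w Nu] fuv.
have Nu_v : [set w | f u w] = [set v].
  by rewrite Nu; congr [set _]; apply/esym/set1P; rewrite -Nu inE.
apply/setP => y; rewrite !inE; apply/idP/eqP => [c_uy | ->]; last exact: connect0.
apply: (connect_ind (P := fun y => y = u)) c_uy _ _ => // a b -> /andP[fub].
have : b \in [set w | f u w] by rewrite inE.
by rewrite Nu_v inE => /eqP ->; rewrite !eqxx.
Qed.

Variables (T : finType) (L : T -> V).
Hypothesis L_inj : injective L.
Hypothesis leaves : forall v, (#|[set w | f v w]| == 1) = (v \in codom L).
Hypothesis deg3 : forall v, #|[set w | f v w]| <= 3.
Implicit Type S : {set T}.

Definition part S u v := [set x in S | L x \in side u v].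

Lemma card_parts S u v : f u v -> #|part S u v| + #|part S v u| = #|S|.
Proof.
move=> fuv; rewrite -(cardsID [set x | L x \in side u v] S) /part setIdE.
by congr (_ + _); apply: eq_card => x; rewrite -(setC_side fuv) !inE andbC.
Qed.

Lemma card_part_leaf S u v : #|[set w | f u w]| = 1 -> f u v -> #|part S u v| <= 1.
Proof.
move=> leaf_u fuv; rewrite /part (leaf_side leaf_u fuv); apply/card_le1_eqP => x y.
by rewrite !inE => /andP[_ /eqP Lx] /andP[_ /eqP Ly]; apply: L_inj; rewrite Lx Ly.
Qed.

Lemma part_cover S u v : f u v -> (forall x, L x != u) ->
  part S u v \subset \bigcup_(z in [set w | f u w] :\ v) part S z u.
Proof.
move=> fuv Lu; apply/subsetP => x; rewrite inE => /andP[Sx xuv].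
have [z [fuz zv xzu]] := side_split fuv xuv (Lu x).
apply/bigcupP; exists z; first by rewrite !inE zv fuz.
by rewrite inE Sx.
Qed.

(* A heavy arc [(u, v)] whose side is minimal cannot point into a light side:
   one of the at most two other neighbours of [u] would carry a smaller heavy side. *)
Lemma balanced_edge S m : 3 * m + 3 <= #|S| ->
  exists u v, [/\ f u v, m < #|part S u v| & m < #|part S v u|].
Proof.
move=> le_S; pose heavy := [set p : V * V | f p.1 p.2 && (m < #|part S p.1 p.2|)].
have [p0 heavy_p0] : exists p0, p0 \in heavy.
  have [x0 Sx0] : exists x0, x0 \in S by apply/card_gt0P; apply: leq_trans le_S; rewrite addn3.
  have /cards1P[z0 N0] : #|[set w | f (L x0) w]| == 1 by rewrite leaves codom_f.
  have : z0 \in [set w | f (L x0) w] by rewrite N0 set11.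
  rewrite inE => f0; have := card_parts S f0.
  case: (ltnP m #|part S (L x0) z0|) => [heavy0 | light0] sum.
    by exists (L x0, z0); rewrite /heavy inE /= f0 heavy0.
  by exists (z0, L x0); rewrite /heavy inE /= f_sym f0 /=; lia.
have [[u v] + min_uv] :=
  @arg_minnP _ p0 (fun p => p \in heavy) (fun p => #|side p.1 p.2|) heavy_p0.
rewrite /heavy inE /= => /andP[fuv heavy_uv].
have [heavy_vu | light_vu] := ltnP m #|part S v u|; first by exists u, v.
have heavier_uv : 2 * m + 3 <= #|part S u v| by have := card_parts S fuv; lia.
have Lu x : L x != u.
  apply/eqP => Lxu; have leaf_u : #|[set w | f u w]| = 1.
    by apply/eqP; rewrite leaves -Lxu codom_f.
  by have := card_part_leaf S leaf_u fuv; lia.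
have [z [fuz zv heavy_zu]] : exists z, [/\ f u z, z != v & m < #|part S z u|].
  case: (boolP [exists z in [set w | f u w] :\ v, m < #|part S z u|]).
    by case/exists_inP => z; rewrite !inE => /andP[zv fuz] heavy_zu; exists z.
  move/exists_inPn => light; exfalso.
  have deg_u : #|[set w | f u w] :\ v| <= 2.
    by have := deg3 u; rewrite (cardsD1 v) inE fuv; lia.
  have := leq_trans (subset_leq_card (part_cover S fuv Lu)) (card_bigcup_le _ _).
  have : \sum_(z in [set w | f u w] :\ v) #|part S z u| <= #|[set w | f u w] :\ v| * m.
    by rewrite -sum_nat_const; apply: leq_sum => z /light; rewrite -leqNgt.
  have := leq_mul deg_u (leqnn m); lia.
have := min_uv (z, u); rewrite /heavy inE /= f_sym fuz heavy_zu => /(_ isT).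
by rewrite leqNgt (proper_card (side_proper fuv fuz zv)).
Qed.

End SubcubicTree.

Lemma rank_decomposition_separated (T : finType) (e : rel T) r (S : {set T}) j :
  symmetric e -> (forall x y, connect e x y) ->
  rank_decomposition_le e r -> ball_separated e S j -> #|S| < 3 * 2 ^ r + 3.
Proof.
move=> e_sym e_conn [V [f [L [[f_sym f_irr] [f_conn f_arcs] deg3 [L_inj leaves] cut_le]]]] sepS.
rewrite ltnNge; apply/negP.
case/(balanced_edge f_sym f_irr f_conn f_arcs L_inj leaves deg3) => u [v [fuv big_uv big_vu]].
pose X := [set x | connect (remove_edge f u v) u (L x)].
have rX : cutrank e X <= r := cut_le u v fuv.
have setC_X : ~: X = [set x | connect (remove_edge f v u) v (L x)].
  apply/setP => x; rewrite !inE -!in_side.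
  by rewrite -(setC_side f_sym f_irr f_conn f_arcs fuv) in_setC.
have rXC : cutrank e (~: X) <= r by rewrite setC_X; apply: cut_le; rewrite f_sym.
have sub_uv : part f L S u v \subset X.
  by apply/subsetP => x; rewrite !inE -in_side => /andP[].
have sub_vu : part f L S v u \subset ~: X.
  by rewrite setC_X; apply/subsetP => x; rewrite !inE -in_side => /andP[].
have inS w w' x : x \in part f L S w w' -> x \in S by rewrite inE => /andP[].
have [a Pa dom_a] := exists_dominated e_sym e_conn rX sub_uv big_uv.
have [b Pb dom_b] := exists_dominated e_sym e_conn rXC sub_vu big_vu.
have [c [ac bc far]] := sepS a b (inS _ _ _ Pa) (inS _ _ _ Pb).
have Xa := subsetP sub_uv a Pa; have XCb := subsetP sub_vu b Pb.
case Xc : (c \in X).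
  have XCc : c \notin ~: X by rewrite in_setC Xc.
  have [b' Pb' /andP[b'b le_b']] := dom_b c XCc.
  have b'a : b' != a by apply: contraTneq (subsetP sub_vu b' Pb') => ->; rewrite in_setC Xa.
  by have := far b' (inS _ _ _ Pb') b'a b'b; lia.
have [a' Pa' /andP[a'a le_a']] := dom_a c (negbT Xc).
have a'b : a' != b by apply: contraTneq (subsetP sub_uv a' Pa') => ->; rewrite in_setC in XCb.
by have := far a' (inS _ _ _ Pa') a'a a'b; lia.
Qed.

Theorem corollary3 (T : finType) (e : rel T) (e_sym : symmetric e)
  (e_irr : irreflexive e) (d k : nat) (Hd : has_diameter e d)
  (Hk : exists R : {set T}, resolving e R /\ #|R| = k) :
  (forall t : nat, ~ has_clique_minor e t ->
     #|T| <= (d * k + 1) ^ (d * (t - 1)) + 1) /\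
  (forall r : nat, rankwidth_le e r ->
     #|T| <= (d * k + 1) ^ (d * (3 * 2 ^ r + 2)) + 1).
Proof.
case: Hd => e_conn [dist_le_d _]; case: Hk => R [R_res <-].
have card_le D : (forall j (S : {set T}), S \subset R -> #|S| = D.+1 ->
                   ~ ball_separated e S j) ->
    #|T| <= (d * #|R| + 1) ^ (d * D) + 1.
  move/(card_le_unseparated dist_le_d R_res)/leq_trans; apply.
  apply: leq_trans (leq_addr 1 _); have [-> | d_gt0] := posnP d; first by rewrite !mul0n.
  by rewrite leq_expn2r // addn1 ltnS leq_pmull.
split=> [[|t] noKt | r rw_r].
- by case: noKt; exists (fun=> set0); split; case.
- rewrite subSS subn0; apply: card_le => j S _ cardS.
  by move/(separated_clique_minor e_sym e_conn); rewrite cardS.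
- case: rw_r => [small | dec]; first by rewrite (leq_trans small) ?leq_addl.
  apply: card_le => j S _ cardS.
  by move/(rank_decomposition_separated e_sym e_conn dec); rewrite cardS -addnS ltnn.
Qed.
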